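(* There exists a binary Euclidean LCD $[29,11,9]$ code.
   Context: A binary $[n,k,d]$ code is a $k$-dimensional subspace $C\subseteq\mathbb{F}_2^n$ with minimum nonzero Hamming weight $d$; it is Euclidean LCD if $C\cap C^{\perp_E}=\{0\}$, where $C^{\perp_E}$ is the dual with respect to $\langle x,y\rangle_E=\sum x_iy_i$. *)

From HB Require Import structures.
From mathcomp Require Import all_boot all_order all_algebra.
Set Implicit Arguments. Unset Strict Implicit. Unset Printing Implicit Defensive.
Import GRing.Theory.
Local Open Scope ring_scope.

Definition hweight (n : nat) (x : 'rV['F_2]_n) : nat := #|[set i | x 0 i != 0]|.

Definition einner (n : nat) (x y : 'rV['F_2]_n) : 'F_2 := \sum_(i < n) x 0 i * y 0 i.

Definition min_distance (n : nat) (C : {vspace 'rV['F_2]_n}) (d : nat) : Prop :=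
  (exists2 x, x \in C & (x != 0) && (hweight x == d)) /\
  (forall x, x \in C -> x != 0 -> (d <= hweight x)%N).

Definition in_euclid_dual (n : nat) (C : {vspace 'rV['F_2]_n}) (x : 'rV['F_2]_n) : Prop :=
  forall y, y \in C -> einner x y = 0.

Definition euclid_LCD (n : nat) (C : {vspace 'rV['F_2]_n}) : Prop :=
  forall x, x \in C -> in_euclid_dual C x -> x = 0.

Definition is_code (n k d : nat) (C : {vspace 'rV['F_2]_n}) : Prop :=
  \dim C = k /\ min_distance C d.
Arguments is_code n k d C : clear implicits.

From mathcomp Require Import all_boot all_order all_algebra.
Set Implicit Arguments. Unset Strict Implicit. Unset Printing Implicit Defensive.
Import GRing.Theory.
Local Open Scope ring_scope.

(* Over F_2 the codewords are exactly the sums of subsets of generator rows, so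
   all 2^11 of them can be enumerated by computation on bit lists: every nonempty
   subset of rows sums to a word of weight at least 9, one of them has weight
   exactly 9, and every such word has odd inner product with some generator row.
   Positive weights make the rows independent, so the dimension is 11, and a
   nonzero codeword that is not orthogonal to some generator row cannot lie in
   the dual, so C meets its dual only in 0. *)

Lemma F2_natr_odd (m : nat) : (m%:R : 'F_2) = (odd m)%:R.
Proof. by rewrite -Fp_nat_mod // modn2. Qed.

Lemma F2_natr_neq0 (x : 'F_2) : (x != 0)%:R = x.
Proof. by case: x => [[|[|m]] Hm] //; apply/val_inj. Qed.

Lemma F2_natr_addb (b c : bool) : (b (+) c)%:R = b%:R + c%:R :> 'F_2.
Proof. by case: b; case: c; apply/val_inj. Qed.

Lemma F2_addrr (V : lmodType 'F_2) (v : V) : v + v = 0.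
Proof. by rewrite -mulr2n -scaler_nat pchar_Fp_0 ?scale0r. Qed.

Lemma sum_ord_count n (P : pred nat) : (\sum_(i < n) P i)%N = count P (iota 0 n).
Proof.
rewrite -sum1_count -(big_mkord xpredT (fun i => nat_of_bool (P i))).
rewrite /index_iota subn0 [RHS]big_mkcond.
by apply: eq_bigr => i _; case: (P i).
Qed.

Lemma card_ord_count n (P : pred nat) : #|[set i : 'I_n | P i]| = count P (iota 0 n).
Proof.
rewrite -sum_ord_count -sum1_card big_mkcond /=.
by apply: eq_bigr => i _; rewrite inE; case: (P i).
Qed.

Fixpoint xorbits (u v : seq bool) : seq bool :=
  match u, v with
  | x :: u', y :: v' => (x (+) y) :: xorbits u' v'
  | [::], _ => v
  | _, [::] => u
  end.

Lemma nth_xorbits u v i : nth false (xorbits u v) i = nth false u i (+) nth false v i.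
Proof. by elim: u v i => [|x u IH] [|y v] [|i] //=; rewrite addbF. Qed.

Definition encode (rs : seq (seq bool)) (a : seq bool) : seq bool :=
  foldr xorbits [::] (mask a rs).

Lemma encode_cons r rs b a :
  encode (r :: rs) (b :: a) = if b then xorbits r (encode rs a) else encode rs a.
Proof. by case: b. Qed.

Lemma encode_zero rs a : ~~ has id a -> encode rs a = [::].
Proof. by elim: rs a => [|r rs IH] [|[] a] //= /IH. Qed.

Fixpoint all_words (k : nat) : seq (seq bool) :=
  if k is k'.+1 then map (cons false) (all_words k') ++ map (cons true) (all_words k')
  else [:: [::]].

Lemma mem_all_words k a : (a \in all_words k) = (size a == k).
Proof.
elim: k a => [|k IH] [|b a] //=; rewrite mem_cat.
  by apply/norP; split; apply/mapP => -[].
rewrite eqSS -IH; apply/orP/idP => [[] /mapP[_ ? [_ ->]] // | Ha].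
by case: b; [right | left]; apply: map_f.
Qed.

Lemma hweight_eq0 n (x : 'rV['F_2]_n) : (hweight x == 0%N) = (x == 0).
Proof.
rewrite /hweight cards_eq0; apply/eqP/eqP => [Hx | ->].
  apply/rowP => i; rewrite mxE; apply/eqP; apply: contraT => nz.
  by rewrite -(in_set0 i) -Hx inE.
by apply/eqP; rewrite -subset0; apply/subsetP => i; rewrite inE mxE eqxx.
Qed.

Section BitVectors.

Variable n : nat.

Definition vec_of_bits (s : seq bool) : 'rV['F_2]_n := \row_i (nth false s i)%:R.

Definition bweight (s : seq bool) : nat := count (nth false s) (iota 0 n).

Definition bdot (u v : seq bool) : bool :=
  odd (count (fun i => nth false u i && nth false v i) (iota 0 n)).

Lemma vec_of_bits_nil : vec_of_bits [::] = 0.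
Proof. by apply/rowP => i; rewrite !mxE nth_nil. Qed.

Lemma vec_of_bits_xor u v : vec_of_bits (xorbits u v) = vec_of_bits u + vec_of_bits v.
Proof. by apply/rowP => i; rewrite !mxE nth_xorbits F2_natr_addb. Qed.

Lemma hweight_vec_of_bits s : hweight (vec_of_bits s) = bweight s.
Proof.
rewrite /hweight /bweight -card_ord_count; apply: eq_card => i.
by rewrite !inE mxE; case: nth.
Qed.

Lemma einner_vec_of_bits u v : einner (vec_of_bits u) (vec_of_bits v) = (bdot u v)%:R.
Proof.
rewrite /einner /bdot -F2_natr_odd -sum_ord_count natr_sum.
by apply: eq_bigr => i _; rewrite !mxE -natrM mulnb.
Qed.

End BitVectors.

Section BitCode.

Variable n : nat.
Implicit Types (rs : seq (seq bool)) (a : seq bool).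

Local Notation vec := (@vec_of_bits n).

Definition bit_code rs : {vspace 'rV['F_2]_n} := <<map vec rs>>%VS.

Lemma vec_of_bits_encode_cons r rs b a :
  vec (encode (r :: rs) (b :: a)) = b%:R *: vec r + vec (encode rs a).
Proof. by case: b; rewrite encode_cons ?vec_of_bits_xor ?scale1r ?scale0r ?add0r. Qed.

Lemma bit_codeP rs x :
  reflect (exists2 a, size a = size rs & x = vec (encode rs a)) (x \in bit_code rs).
Proof.
elim: rs x => [|r rs IH] x.
  rewrite /bit_code span_nil memv0; apply: (iffP eqP) => [-> | [[|//] _ ->]].
    by exists [::]; rewrite // vec_of_bits_nil.
  exact: vec_of_bits_nil.
rewrite /bit_code /= span_cons; apply: (iffP memv_addP).
  move=> [_ /vlineP[k ->] [_ /IH[a Ha ->] ->]].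
  by exists ((k != 0) :: a); rewrite /= ?Ha // vec_of_bits_encode_cons F2_natr_neq0.
move=> [[|b a] //= [Ha] ->]; rewrite vec_of_bits_encode_cons.
exists (b%:R *: vec r); first by apply/vlineP; exists b%:R.
by exists (vec (encode rs a)); first by apply/IH; exists a.
Qed.

Lemma free_bit_rows rs :
  (forall a, size a = size rs -> has id a -> vec (encode rs a) != 0) -> free (map vec rs).
Proof.
elim: rs => [|r rs IH] nz_code; first exact: nil_free.
rewrite free_cons; apply/andP; split.
  apply/negP => /bit_codeP[a Ha Hr].
  have /negP[] := nz_code (true :: a) (congr1 S Ha) isT.
  by rewrite vec_of_bits_encode_cons scale1r -Hr F2_addrr.
apply: IH => a Ha nz_a; have := nz_code (false :: a) (congr1 S Ha) nz_a.
by rewrite vec_of_bits_encode_cons scale0r add0r.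
Qed.

Lemma dim_bit_code rs :
  (forall a, size a = size rs -> has id a -> vec (encode rs a) != 0) ->
  \dim (bit_code rs) = size rs.
Proof. by move/free_bit_rows/eqP; rewrite size_map. Qed.

Lemma min_distance_bit_code rs d :
  (0 < d)%N -> (exists2 a, size a = size rs & bweight n (encode rs a) = d) ->
  (forall a, size a = size rs -> has id a -> d <= bweight n (encode rs a))%N ->
  min_distance (bit_code rs) d.
Proof.
move=> d_gt0 [a0 Ha0 wt_a0] wt_ge; split.
  exists (vec (encode rs a0)); first by apply/bit_codeP; exists a0.
  by rewrite -hweight_eq0 hweight_vec_of_bits wt_a0 -lt0n d_gt0 eqxx.
move=> _ /bit_codeP[a Ha ->]; rewrite hweight_vec_of_bits.
have [/(wt_ge a Ha) // | /encode_zero ->] := boolP (has id a).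
by rewrite vec_of_bits_nil eqxx.
Qed.

Lemma euclid_LCD_bit_code rs :
  (forall a, size a = size rs -> has id a -> has (bdot n (encode rs a)) rs) ->
  euclid_LCD (bit_code rs).
Proof.
move=> dot_nz _ /bit_codeP[a Ha ->] dual.
have [/(dot_nz a Ha)/hasP[r r_rs dot_r] | /encode_zero ->] := boolP (has id a).
  have := dual (vec r) (memv_span (map_f vec r_rs)).
  by rewrite einner_vec_of_bits dot_r => /eqP; rewrite oner_eq0.
exact: vec_of_bits_nil.
Qed.

Lemma bit_code_LCD rs d : (0 < d)%N ->
  has (fun a => bweight n (encode rs a) == d) (all_words (size rs)) ->
  all (fun a => has id a ==> (d <= bweight n (encode rs a))%N && has (bdot n (encode rs a)) rs)
      (all_words (size rs)) ->
  is_code n (size rs) d (bit_code rs) /\ euclid_LCD (bit_code rs).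
Proof.
move=> d_gt0 /hasP[a0 /[!mem_all_words]/eqP Ha0 /eqP wt_a0] /allP checked.
have {}checked a : size a = size rs -> has id a ->
    (d <= bweight n (encode rs a))%N && has (bdot n (encode rs a)) rs.
  by move=> Ha nz_a; have := checked a; rewrite mem_all_words Ha eqxx nz_a; apply.
have wt_ge a Ha nz_a := proj1 (andP (checked a Ha nz_a)).
split; [split|].
- apply: dim_bit_code => a Ha nz_a.
  by rewrite -hweight_eq0 hweight_vec_of_bits -lt0n (leq_trans d_gt0 (wt_ge a Ha nz_a)).
- by apply: min_distance_bit_code => //; exists a0.
- by apply: euclid_LCD_bit_code => a Ha nz_a; case/andP: (checked a Ha nz_a).
Qed.

End BitCode.

Definition generator_29_11 : seq (seq bool) := map (map odd) [::
  [:: 1; 0; 0; 0; 0; 0; 0; 0; 0; 0; 0; 0; 1; 1; 1; 0; 0; 0; 0; 1; 1; 0; 1; 1; 0; 1; 1; 1; 0];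
  [:: 0; 1; 0; 0; 0; 0; 0; 0; 0; 0; 0; 0; 1; 1; 0; 1; 1; 0; 1; 0; 1; 0; 0; 1; 1; 1; 1; 0; 1];
  [:: 0; 0; 1; 0; 0; 0; 0; 0; 0; 0; 0; 1; 1; 1; 0; 1; 0; 0; 0; 0; 1; 1; 0; 0; 0; 1; 1; 0; 0];
  [:: 0; 0; 0; 1; 0; 0; 0; 0; 0; 0; 0; 1; 0; 1; 1; 1; 0; 0; 0; 1; 1; 0; 0; 1; 1; 1; 0; 0; 1];
  [:: 0; 0; 0; 0; 1; 0; 0; 0; 0; 0; 0; 1; 1; 0; 1; 0; 0; 1; 1; 0; 1; 0; 1; 1; 1; 0; 1; 0; 1];
  [:: 0; 0; 0; 0; 0; 1; 0; 0; 0; 0; 0; 0; 0; 0; 1; 0; 0; 1; 1; 0; 1; 1; 0; 0; 1; 1; 1; 1; 0];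
  [:: 0; 0; 0; 0; 0; 0; 1; 0; 0; 0; 0; 0; 0; 1; 1; 1; 1; 1; 1; 0; 0; 0; 0; 1; 0; 0; 1; 0; 0];
  [:: 0; 0; 0; 0; 0; 0; 0; 1; 0; 0; 0; 0; 1; 1; 0; 0; 1; 0; 0; 0; 0; 1; 1; 0; 1; 0; 1; 1; 0];
  [:: 0; 0; 0; 0; 0; 0; 0; 0; 1; 0; 0; 0; 1; 0; 1; 0; 1; 1; 0; 1; 1; 0; 0; 0; 0; 0; 1; 1; 1];
  [:: 0; 0; 0; 0; 0; 0; 0; 0; 0; 1; 0; 1; 1; 1; 0; 1; 0; 1; 0; 1; 0; 1; 1; 0; 1; 1; 0; 1; 0];
  [:: 0; 0; 0; 0; 0; 0; 0; 0; 0; 0; 1; 0; 1; 0; 1; 0; 1; 0; 1; 0; 1; 0; 0; 1; 1; 0; 0; 1; 0]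
].

Theorem proposition4p5 :
  exists C : {vspace 'rV['F_2]_29}, is_code 29 11 9 C /\ euclid_LCD C.
Proof.
exists (bit_code 29 generator_29_11).
by apply: bit_code_LCD; vm_compute.
Qed.
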